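(* Let $A\in\mathbb C^{N\times N}$ be an adjacency matrix with $k$ distinct eigenvalues $\lambda_1,\dots,\lambda_k$, and for each $i=1,\dots,k$ let $V_i\in\mathbb C^{N\times a_i}$ ($a_i$ the algebraic multiplicity of $\lambda_i$) be an eigenvector submatrix whose columns form the union of the Jordan chains of $\lambda_i$ in a Jordan decomposition $A=VJV^{-1}$, normalized so that $\|V_i\|_1=1$. Then the graph total variation satisfies $\mathrm{TV}_G(V_i)=\|V_i-AV_i\|_1\le |1-\lambda_i|+1$.
   Context: $\|\cdot\|_1$ denotes the matrix norm induced by the vector $1$-norm (maximum absolute column sum). A Jordan chain of $A$ for $\lambda$ is a sequence $v_1,\dots,v_p$ with $(A-\lambda I)v_1=0$, $v_1\neq0$, and $(A-\lambda I)v_j=v_{j-1}$ for $j\ge2$; the union of the Jordan chains of $\lambda_i$ spans the generalized eigenspace $\mathrm{Ker}(A-\lambda_iI)^{m_i}$. *)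

From HB Require Import structures.
From mathcomp Require Import all_boot all_order all_algebra.
From mathcomp Require Import complex.
From mathcomp Require Import reals.
Set Implicit Arguments. Unset Strict Implicit. Unset Printing Implicit Defensive.
Import Order.TTheory GRing.Theory Num.Theory.
Local Open Scope ring_scope.

(* Matrix norm induced by the vector 1-norm: maximum absolute column sum.
   The column sums are nonnegative reals (inside R[i]), so the max is taken
   w.r.t. the (partial) order of the numeric field R[i], starting from 0. *)
Definition mxnorm1 (R : realType) (m n : nat) (M : 'M[R[i]]_(m, n)) : R[i] :=
  \big[Num.max/0]_(j < n) \sum_(i < m) `|M i j|.

(* The columns of V (an N x a matrix) form a union of Jordan chains of A for
   the eigenvalue lam, listed consecutively: each column v_j either starts a
   chain ((A - lam I) v_j = 0 with v_j <> 0) or continues the chain of the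
   previous column ((A - lam I) v_j = v_(j-1)). *)
Definition jordan_chains_columns (R : realType) (N a : nat)
    (A : 'M[R[i]]_N) (lam : R[i]) (V : 'M[R[i]]_(N, a)) : Prop :=
  forall j : 'I_a,
    ((A - lam%:M) *m col j V = 0 /\ col j V != 0)
    \/ (exists j' : 'I_a, j'.+1 = j /\ (A - lam%:M) *m col j V = col j' V).

Definition alg_mult (R : realType) (N : nat) (A : 'M[R[i]]_N) (lam : R[i]) : nat :=
  mup lam (char_poly A).

From HB Require Import structures.
From mathcomp Require Import all_boot all_order all_algebra.
From mathcomp Require Import complex.
From mathcomp Require Import reals.
Import Order.TTheory GRing.Theory Num.Theory.
Local Open Scope ring_scope.

(* Since V - A V = (1 - lam) V - (A - lam I) V, the triangle inequality reduces
   the claim to ||(A - lam I) V||_1 <= ||V||_1 = 1.  The map A - lam I sends each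
   vector of a Jordan chain to its predecessor in the chain, or to 0 for the
   head of the chain, so every column of (A - lam I) V is zero or a column of V. *)

Section NonnegBigmax.
Context {C : numDomainType} {I : eqType} {F : I -> C}.

Lemma bigmax_nneg_le (r : seq I) (c : C) :
  0 <= c -> (forall i, F i <= c) -> \big[Num.max/0]_(i <- r) F i <= c.
Proof.
move=> c_ge0 F_le; apply: (big_ind (fun x => x <= c)) => // x y x_le y_le.
by rewrite /Num.max; case: ifP.
Qed.

Hypothesis F_ge0 : forall i, 0 <= F i.

Lemma bigmax_nneg_ge0 (r : seq I) : 0 <= \big[Num.max/0]_(i <- r) F i.
Proof. by apply: (big_ind (fun x => 0 <= x)) => // x y; rewrite /Num.max; case: ifP. Qed.

Lemma le_bigmax_nneg (r : seq I) (i : I) :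
  i \in r -> F i <= \big[Num.max/0]_(k <- r) F k.
Proof.
elim: r => [|x s IHs] //; rewrite big_cons in_cons.
have cmp : F x >=< \big[Num.max/0]_(k <- s) F k.
  by apply: real_comparable; apply: ger0_real; [apply: F_ge0 | apply: bigmax_nneg_ge0].
rewrite (comparable_le_max _ cmp).
by case/orP => [/eqP-> | /IHs ->]; rewrite ?lexx ?orbT.
Qed.

End NonnegBigmax.

Section MatrixOneNorm.
Context {R : realType}.
Local Notation C := R[i].

Lemma mxnorm1_le {m n : nat} (M : 'M[C]_(m, n)) (c : C) :
  0 <= c -> (forall j, \sum_i `|M i j| <= c) -> mxnorm1 M <= c.
Proof. exact: bigmax_nneg_le. Qed.

Lemma colsum_le_mxnorm1 {m n : nat} (M : 'M[C]_(m, n)) (j : 'I_n) :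
  \sum_i `|M i j| <= mxnorm1 M.
Proof.
have colsum_ge0 k : 0 <= \sum_i `|M i k| by apply: sumr_ge0.
exact: le_bigmax_nneg colsum_ge0 _ _ (mem_index_enum j).
Qed.

Lemma mxnorm1_ge0 {m n : nat} (M : 'M[C]_(m, n)) : 0 <= mxnorm1 M.
Proof. by apply: bigmax_nneg_ge0 => j; apply: sumr_ge0. Qed.

Lemma mxnorm1N {m n : nat} (M : 'M[C]_(m, n)) : mxnorm1 (- M) = mxnorm1 M.
Proof. by apply: eq_bigr => j _; apply: eq_bigr => i _; rewrite mxE normrN. Qed.

Lemma mxnorm1D {m n : nat} (M M' : 'M[C]_(m, n)) :
  mxnorm1 (M + M') <= mxnorm1 M + mxnorm1 M'.
Proof.
apply: mxnorm1_le => [|j]; first by rewrite addr_ge0 ?mxnorm1_ge0.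
apply: le_trans (_ : \sum_i (`|M i j| + `|M' i j|) <= _).
  by apply: ler_sum => i _; rewrite mxE ler_normD.
by rewrite big_split lerD ?colsum_le_mxnorm1.
Qed.

Lemma mxnorm1Z {m n : nat} (c : C) (M : 'M[C]_(m, n)) :
  mxnorm1 (c *: M) = `|c| * mxnorm1 M.
Proof.
have colsumZ j : \sum_i `|(c *: M) i j| = `|c| * \sum_i `|M i j|.
  by rewrite mulr_sumr; apply: eq_bigr => i _; rewrite mxE normrM.
apply/eqP; rewrite eq_le; apply/andP; split.
  apply: mxnorm1_le => [|j]; first by rewrite mulr_ge0 ?mxnorm1_ge0.
  by rewrite colsumZ ler_wpM2l ?colsum_le_mxnorm1.
have [-> | c_neq0] := eqVneq c 0; first by rewrite normr0 mul0r mxnorm1_ge0.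
rewrite -ler_pdivlMl ?normr_gt0 //.
apply: mxnorm1_le => [|j]; first by rewrite mulr_ge0 ?invr_ge0 ?mxnorm1_ge0.
by rewrite ler_pdivlMl ?normr_gt0 // -colsumZ colsum_le_mxnorm1.
Qed.

Lemma mxnorm1_le_cols {m n p : nat} (M : 'M[C]_(m, n)) (V : 'M[C]_(m, p)) :
  (forall j, col j M = 0 \/ exists k, col j M = col k V) ->
  mxnorm1 M <= mxnorm1 V.
Proof.
move=> cols; apply: mxnorm1_le => [|j]; first exact: mxnorm1_ge0.
have colsumE (W : 'M[C]_(m, _)) k : \sum_i `|W i k| = \sum_i `|col k W i 0|.
  by apply: eq_bigr => i _; rewrite mxE.
rewrite colsumE; case: (cols j) => [-> | [k ->]].
  by rewrite big1 ?mxnorm1_ge0 // => i _; rewrite mxE normr0.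
by rewrite -colsumE colsum_le_mxnorm1.
Qed.

Lemma mxnorm1_jordan_chains_shift {m n : nat} (A : 'M[C]_m) (lam : C)
    (V : 'M[C]_(m, n)) :
  jordan_chains_columns A lam V -> mxnorm1 ((A - lam%:M) *m V) <= mxnorm1 V.
Proof.
move=> chains; apply: mxnorm1_le_cols => j.
rewrite colE -mulmxA -colE.
case: (chains j) => [[-> _] | [k [_ ->]]]; [by left | by right; exists k].
Qed.

End MatrixOneNorm.

Theorem theorem2 (R : realType) (N : nat) (A : 'M[R[i]]_N) (lam : R[i])
    (a : nat) (V : 'M[R[i]]_(N, a)) :
  eigenvalue A lam ->
  a = alg_mult A lam ->
  jordan_chains_columns A lam V ->
  \rank V = a ->
  (forall x : 'cV[R[i]]_N,
      (exists c : 'cV[R[i]]_a, x = V *m c) <-> (A - lam%:M) ^+ a *m x = 0) ->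
  mxnorm1 V = 1 ->
  mxnorm1 (V - A *m V) <= `|1 - lam| + 1.
Proof.
move=> _ _ chains _ _ V_unit.
have -> : V - A *m V = (1 - lam) *: V - (A - lam%:M) *m V.
  by rewrite mulmxBl mul_scalar_mx scalerBl scale1r opprB addrA subrK.
apply: le_trans (mxnorm1D _ _) _.
rewrite mxnorm1N mxnorm1Z V_unit mulr1 lerD2l -[leRHS]V_unit.
exact: mxnorm1_jordan_chains_shift.
Qed.
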